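(* Let $W$ be the Witt algebra with basis $\{x_n\mid n\in\mathbb{Z}\}$ and bracket $[x_m,x_n]=(n-m)x_{m+n}$. Let $(V_1,\cdot)$ and $(V_2,* )$ be left-symmetric algebra structures on the underlying space of $W$, each with commutator equal to the bracket of $W$, given by $x_m\cdot x_n=f_1(m,n)x_{m+n}$ and $x_m*x_n=f_2(m,n)x_{m+n}$. If $V_1$ and $V_2$ are isomorphic as left-symmetric algebras, then either $f_1(m,n)=f_2(m,n)$ for all $m,n$, or $f_1(m,n)=-f_2(-m,-n)$ for all $m,n$.
   Context: A left-symmetric algebra is a vector space with bilinear product satisfying $(xy)z-x(yz)=(yx)z-y(xz)$ for all $x,y,z$. *)

(* The Witt algebra's underlying
   space is the space of finitely supported functions Z -> C, i.e.
   multinomials' {malg C[int]}, with basis x_n := << n >>. *)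
From HB Require Import structures.
From mathcomp Require Import all_boot all_algebra.
From mathcomp Require Import Rstruct.
From mathcomp Require Import complex.
From mathcomp Require Import finmap monalg.

Set Implicit Arguments.
Unset Strict Implicit.
Unset Printing Implicit Defensive.

Import GRing.Theory Num.Theory.
Local Open Scope ring_scope.

Notation C := (complex Rdefinitions.R).

Notation W := {malg C[int]}.

Definition xb (n : int) : W := << n >>.

Definition lsa_mul (f : int -> int -> C) (a b : W) : W :=
  \sum_(m <- msupp a) \sum_(n <- msupp b)
     ((a@_m * b@_n * f m n) *: xb (m + n)).

Definition witt_bracket (a b : W) : W := lsa_mul (fun m n => (n - m)%:~R) a b.

Definition left_symmetric (f : int -> int -> C) : Prop :=
  forall a b c : W,
    lsa_mul f (lsa_mul f a b) c - lsa_mul f a (lsa_mul f b c) =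
    lsa_mul f (lsa_mul f b a) c - lsa_mul f b (lsa_mul f a c).

Definition commutator_is_witt (f : int -> int -> C) : Prop :=
  forall a b : W, lsa_mul f a b - lsa_mul f b a = witt_bracket a b.

Definition lsa_isomorphism (f1 f2 : int -> int -> C) (phi : W -> W) : Prop :=
  [/\ forall (c : C) (a b : W), phi (c *: a + b) = c *: phi a + phi b,
      bijective phi &
      forall a b : W, phi (lsa_mul f1 a b) = lsa_mul f2 (phi a) (phi b)].

(* An isomorphism phi : V1 -> V2 of left-symmetric algebras is in particular an
   automorphism of the Witt algebra, since both commutators are the Witt bracket.
   The element y = phi(x_0) acts diagonally, [y, phi(x_n)] = n phi(x_n); comparing
   extreme degrees and using surjectivity forces y = c x_0, hence each phi(x_n) is
   supported in degree n/c, and surjectivity again gives 1/c = e = +-1, i.e.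
   phi(x_n) = a_n x_(e n).  The bracket then makes m |-> e a_m multiplicative, and
   comparing the two products of x_m and x_n yields f1(m,n) = e f2(e m, e n). *)
From HB Require Import structures.
From mathcomp Require Import all_boot all_algebra.
From mathcomp Require Import Rstruct complex finmap monalg.
From mathcomp Require Import all_order zify ring.
Import Order.TTheory GRing.Theory Num.Theory.
Set Implicit Arguments.
Unset Strict Implicit.
Unset Printing Implicit Defensive.

Local Open Scope ring_scope.

Lemma big_seq_single (R : nmodType) (I : eqType) (s : seq I) (F : I -> R) i0 :
  uniq s -> (forall i, i \in s -> i != i0 -> F i = 0) ->
  (i0 \notin s -> F i0 = 0) -> \sum_(i <- s) F i = F i0.
Proof.
move=> s_uniq F0 Fi0; have [i0s | i0Ns] := boolP (i0 \in s).
  rewrite (bigD1_seq i0) //= big_seq_cond big1 ?addr0 // => i /andP[].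
  exact: F0.
rewrite Fi0 // big_seq big1 // => i si; apply: F0 => //.
by apply: contraNneq i0Ns => <-.
Qed.

Lemma seq_max_exists (s : seq int) x : x \in s ->
  exists2 p, p \in s & forall k, k \in s -> k <= p.
Proof.
elim: s x => // a [|b s] IH x _.
  by exists a; rewrite ?mem_head // => k; rewrite inE => /eqP ->.
have [p ps pmax] := IH b (mem_head _ _).
exists (Num.max a p); first by rewrite /Num.max; case: ifP; rewrite inE ?eqxx ?ps ?orbT.
by move=> k; rewrite inE le_max => /predU1P[->|/pmax ->]; rewrite ?lexx ?orbT.
Qed.

Lemma xbE n k : (xb n)@_k = (n == k)%:R.
Proof. by rewrite /xb mcoeffU. Qed.

Lemma mkmalgU_xb (c : C) n : << c *g n >> = c *: xb n.
Proof. by apply/malgP => k; rewrite mcoeffZ xbE mcoeffU mulr_natr. Qed.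

Lemma xb_neq0 n : xb n != 0.
Proof. by apply: contra_neq (@oner_neq0 C) => /(congr1 (mcoeff n)); rewrite xbE eqxx mcoeff0. Qed.

Lemma scale_xb_inj n (c d : C) : c *: xb n = d *: xb n -> c = d.
Proof. by rewrite -!mkmalgU_xb => /(congr1 (mcoeff n)); rewrite !mcoeffUU. Qed.

Lemma mcoeff_lsa_mul f (u v : W) k :
  (lsa_mul f u v)@_k = \sum_(m <- msupp u) u@_m * v@_(k - m) * f m (k - m).
Proof.
rewrite raddf_sum; apply: eq_bigr => m _; rewrite raddf_sum.
rewrite (@big_seq_single _ _ _ _ (k - m)) ?fset_uniq //= ?mcoeffZ ?xbE.
- by rewrite subrKC eqxx mulr1.
- move=> n _ nk; rewrite mcoeffZ xbE; case: eqP => [mnk | _]; last by rewrite mulr0.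
  by case/eqP: nk; rewrite -mnk (addrC m) addrK.
- by move=> kmN; rewrite (mcoeff_outdom kmN) mulr0 !mul0r.
Qed.

Lemma mcoeff_lsa_mul_monomial f (c : C) p (v : W) k :
  (lsa_mul f (c *: xb p) v)@_k = c * v@_(k - p) * f p (k - p).
Proof.
rewrite mcoeff_lsa_mul (@big_seq_single _ _ _ _ p) ?fset_uniq ?mcoeffZ ?xbE ?eqxx ?mulr1 //.
- by move=> m _ mp; rewrite mcoeffZ xbE eq_sym (negbTE mp) mulr0 !mul0r.
- by move=> pN; move: pN; rewrite -mcoeff_eq0 mcoeffZ xbE eqxx mulr1 => /eqP ->; rewrite !mul0r.
Qed.

Lemma lsa_mul_monomial f (c d : C) m n :
  lsa_mul f (c *: xb m) (d *: xb n) = (c * d * f m n) *: xb (m + n).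
Proof.
apply/malgP => k; rewrite mcoeff_lsa_mul_monomial !mcoeffZ !xbE.
have [<- | mnk] := eqVneq (m + n) k; first by rewrite addrC addKr eqxx !mulr1.
by rewrite (_ : (n == k - m) = false) ?mulr0 ?mul0r //; apply: contraNF mnk => /eqP ->; rewrite addrC subrK.
Qed.

Lemma lsa_mul_xb f m n : lsa_mul f (xb m) (xb n) = f m n *: xb (m + n).
Proof. by rewrite -[xb m]scale1r -[xb n]scale1r lsa_mul_monomial !mul1r. Qed.

Lemma mcoeff_witt_bracket_x0 (c : C) (v : W) k :
  (witt_bracket (c *: xb 0) v)@_k = c * k%:~R * v@_k.
Proof. by rewrite mcoeff_lsa_mul_monomial !subr0 mulrAC. Qed.

Lemma mcoeff_neq0_exists (v : W) : v != 0 -> exists k, v@_k != 0.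
Proof.
move=> v0; have /fset0Pn[k kv] : msupp v != fset0.
  by apply: contra_neq v0 => v_empty; apply/malgP => k; rewrite mcoeff0 mcoeff_outdom ?v_empty.
by exists k; rewrite mcoeff_neq0.
Qed.

Lemma msupp_extremal (s : int) (v : W) : v != 0 ->
  exists K, v@_K != 0 /\ forall k, s * K < s * k -> v@_k = 0.
Proof.
move=> /mcoeff_neq0_exists[x]; rewrite mcoeff_neq0 => xv.
have [_ /mapP[K Kv ->] Kmax] := seq_max_exists (map_f ( *%R s) xv).
exists K; split; first by rewrite mcoeff_neq0.
move=> k Kk; apply/eqP; rewrite mcoeff_eq0; apply: contraTN Kk => kv.
by rewrite -leNgt Kmax ?map_f.
Qed.

(* The extreme coefficient of [y, v] in the direction s is y_K v_P (P - K), at degree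
   K + P outside the support of v; hence P = K. *)
Lemma witt_eigenvector_extremal (y v : W) (l : C) (s K : int) :
  y@_K != 0 -> (forall k, s * K < s * k -> y@_k = 0) -> 0 < s * K ->
  witt_bracket y v = l *: v -> forall k, s * K < s * k -> v@_k = 0.
Proof.
move=> yK yext sK yv; have [-> k _ | v0] := eqVneq v 0; first exact: mcoeff0.
have [P [vP vext]] := msupp_extremal s v0.
suff PK : P = K by rewrite -PK.
have := congr1 (mcoeff (K + P)) yv.
rewrite mcoeffZ vext ?mulr0; last by nia.
rewrite mcoeff_lsa_mul (@big_seq_single _ _ _ _ K) ?fset_uniq //.
- rewrite (addrC K) addrK => /eqP.
  by rewrite !mulf_eq0 (negbTE yK) (negbTE vP) /= intr_eq0 subr_eq0 => /eqP.
- move=> m ym mK; have s0 : s != 0 by apply: contraTneq sK => ->; rewrite mul0r.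
  have smK : s * m < s * K.
    rewrite lt_neqAle (inj_eq (mulfI s0)) mK leNgt; apply: contraTN ym => /yext /eqP.
    by rewrite mcoeff_eq0.
  by rewrite vext ?mulr0 ?mul0r //; nia.
- by rewrite -mcoeff_eq0 (negbTE yK).
Qed.

Section LinearEndomorphism.

Variable phi : W -> W.
Hypothesis phi_linear : forall (c : C) (a b : W), phi (c *: a + b) = c *: phi a + phi b.

HB.instance Definition _ := GRing.isLinear.Build C W W _ phi phi_linear.

Lemma lsa_hom_witt_bracket f1 f2 : commutator_is_witt f1 -> commutator_is_witt f2 ->
  (forall a b, phi (lsa_mul f1 a b) = lsa_mul f2 (phi a) (phi b)) ->
  forall a b, phi (witt_bracket a b) = witt_bracket (phi a) (phi b).
Proof. by move=> c1 c2 phi_mul a b; rewrite -c1 -c2 -!phi_mul raddfB. Qed.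

Lemma lsa_hom_monomial f g e (a : int -> C) :
  (forall n, phi (xb n) = a n *: xb (n * e)) ->
  (forall u v, phi (lsa_mul f u v) = lsa_mul g (phi u) (phi v)) ->
  forall m n, f m n * a (m + n) = a m * a n * g (m * e) (n * e).
Proof.
move=> phiE phi_mul m n; apply: (@scale_xb_inj (m * e + n * e)).
by rewrite -lsa_mul_monomial -!phiE -phi_mul lsa_mul_xb linearZ /= phiE scalerA mulrDl mulrC.
Qed.

Section WittAutomorphism.

Hypothesis phi_bij : bijective phi.
Hypothesis phi_bracket : forall a b, phi (witt_bracket a b) = witt_bracket (phi a) (phi b).

Lemma phi_xb_neq0 n : phi (xb n) != 0.
Proof. by apply: contra_neq (xb_neq0 n) => h; apply: (bij_inj phi_bij); rewrite h raddf0. Qed.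

Lemma phi_xb_cover k : exists n, (phi (xb n))@_k != 0.
Proof.
case: phi_bij => psi _ phiK; set s := msupp (psi (xb k)).
have [/hasP[n _ nk] | /hasPn s0] := boolP (has (fun n => (phi (xb n))@_k != 0) s).
  by exists n.
have := congr1 (mcoeff k) (phiK (xb k)); rewrite xbE eqxx [psi _]monalgE.
rewrite raddf_sum raddf_sum big_seq big1 => [/eqP | n ns]; first by rewrite eq_sym oner_eq0.
by rewrite /= mkmalgU_xb linearZ mcoeffZ (eqP (negPn (s0 n ns))) mulr0.
Qed.

Let y := phi (xb 0).

Lemma ad_phi_x0 n : witt_bracket y (phi (xb n)) = n%:~R *: phi (xb n).
Proof. by rewrite -phi_bracket /witt_bracket lsa_mul_xb add0r subr0 linearZ. Qed.

Lemma phi_x0_support_dir (s : int) k : 0 < s * k -> y@_k = 0.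
Proof.
have [K [yK yext]] := msupp_extremal s (phi_xb_neq0 0).
have [sK | Ks] := ltP 0 (s * K); last by move=> sk; apply: yext; lia.
(* If 0 < s K, every phi(x_n) stops at degree K in the direction s, so K + s is missed. *)
have [n] := phi_xb_cover (K + s).
by rewrite (witt_eigenvector_extremal yK yext sK (ad_phi_x0 n)) ?eqxx //; nia.
Qed.

Lemma phi_x0E : phi (xb 0) = y@_0 *: xb 0.
Proof.
apply/malgP => k; rewrite mcoeffZ xbE; have [<- | k0] := eqVneq 0 k; first by rewrite mulr1.
rewrite mulr0; have [kpos | kneg] := ltP 0 k; first by apply: (@phi_x0_support_dir 1); lia.
by apply: (@phi_x0_support_dir (-1)); lia.
Qed.

Lemma phi_x0_coef_neq0 : y@_0 != 0.
Proof. by apply: contra_neq (phi_xb_neq0 0); rewrite phi_x0E => ->; rewrite scale0r. Qed.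

Lemma phi_xb_degree n k : (phi (xb n))@_k != 0 -> y@_0 * k%:~R = n%:~R.
Proof.
move=> nk; have := congr1 (mcoeff k) (ad_phi_x0 n).
rewrite {1}/y phi_x0E mcoeff_witt_bracket_x0 mcoeffZ => /eqP.
by rewrite -subr_eq0 -mulrBl mulf_eq0 (negbTE nk) orbF subr_eq0 => /eqP.
Qed.

Lemma witt_automorphism_monomial : exists e (a : int -> C),
  [/\ e = 1 \/ e = -1, forall n, a n != 0 & forall n, phi (xb n) = a n *: xb (n * e)].
Proof.
have [e e1] := mcoeff_neq0_exists (phi_xb_neq0 1).
have ye := phi_xb_degree e1.
have supp n k : (phi (xb n))@_k != 0 -> k = n * e.
  move/phi_xb_degree=> yk; have : y@_0 * (k - n * e)%:~R = 0.
    by rewrite intrB intrM mulrBr yk mulrCA ye mulr1 subrr.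
  by move/eqP; rewrite mulf_eq0 (negbTE phi_x0_coef_neq0) intr_eq0 subr_eq0 => /eqP.
have phi_xb_out n k : k != n * e -> (phi (xb n))@_k = 0.
  by move=> kne; apply: contraNeq kne => /supp ->.
have e_sign : e = 1 \/ e = -1.
  have [n /supp/esym/(congr1 absz)] := phi_xb_cover 1.
  by rewrite abszM /= => /eqP; rewrite muln_eq1 => /andP[_ /eqP]; lia.
exists e, (fun n => (phi (xb n))@_(n * e)); split => // n.
  apply: contra_neq (phi_xb_neq0 n) => a0; apply/malgP => k; rewrite mcoeff0.
  by have [-> | /phi_xb_out] := eqVneq k (n * e).
apply/malgP => k; rewrite mcoeffZ xbE; have [<-|kne] := eqVneq (n * e) k; first by rewrite mulr1.
by rewrite mulr0 phi_xb_out // eq_sym.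
Qed.

End WittAutomorphism.

End LinearEndomorphism.

Lemma multiplicative_of_distinct (R : idomainType) (b : int -> R) :
  (forall n, b n != 0) -> (forall m n, m != n -> b (m + n) = b m * b n) ->
  forall m n, b (m + n) = b m * b n.
Proof.
move=> b_neq0 bD m n; have [<- | ] := eqVneq m n; last exact: bD.
have bDE p q r : p != q -> p + q = r -> b r = b p * b q by move=> pq <-; exact: bD.
have b0 : b 0 = 1 by apply: (mulIf (b_neq0 1)); rewrite mul1r -(bDE 0 1 1).
have [-> | m0] := eqVneq m 0; first by rewrite addr0 b0 mulr1.
(* b(4m) computed as b(3m) b(m) and as b(5m) b(-m) isolates b(2m) = b(m)^2. *)
have h1 : b (4 * m) = b (3 * m) * b m by apply: bDE; lia.
have h2 : b (3 * m) = b (2 * m) * b m by apply: bDE; lia.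
have h3 : b (4 * m) = b (5 * m) * b (- m) by apply: bDE; lia.
have h4 : b (5 * m) = b (2 * m) * b (3 * m) by apply: bDE; lia.
have h5 : b 0 = b m * b (- m) by apply: bDE; lia.
have e : b (2 * m) * (b m * b m) = b (2 * m) * b (2 * m).
  by rewrite mulrA -h2 -h1 h3 h4 h2 -[RHS]mulr1 -b0 h5; ring.
by rewrite (_ : m + m = 2 * m); [exact/esym/(mulfI (b_neq0 _) e) | ring].
Qed.

Lemma witt_scaling_multiplicative (a : int -> C) e : e * e = 1 -> (forall n, a n != 0) ->
  (forall m n, (n - m)%:~R * a (m + n) = a m * a n * (n * e - m * e)%:~R) ->
  forall m n, a (m + n) = e%:~R * (a m * a n).
Proof.
move=> ee a_neq0 aE.
have eeC : (e%:~R : C) * e%:~R = 1 by rewrite -intrM ee.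
have e_neq0 : (e%:~R : C) != 0 by rewrite intr_eq0; apply: contra_eqN ee => /eqP ->.
have ea_mul : forall m n, e%:~R * a (m + n) = e%:~R * a m * (e%:~R * a n).
  apply: (@multiplicative_of_distinct _ (fun n => e%:~R * a n)) => [n | p q pq] /=.
    by rewrite mulf_neq0.
  have qp_neq0 : ((q - p)%:~R : C) != 0 by rewrite intr_eq0 subr_eq0 eq_sym.
  by apply: (mulfI qp_neq0); rewrite mulrCA aE -mulrBl intrM; ring.
move=> m n; apply: (mulfI e_neq0).
by rewrite ea_mul mulrACA eeC mul1r mulrA eeC mul1r.
Qed.

Theorem proposition3p10 (f1 f2 : int -> int -> C) :
  left_symmetric f1 -> commutator_is_witt f1 ->
  left_symmetric f2 -> commutator_is_witt f2 ->
  (exists phi : W -> W, lsa_isomorphism f1 f2 phi) ->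
  (forall m n : int, f1 m n = f2 m n) \/
  (forall m n : int, f1 m n = - f2 (- m) (- n)).
Proof.
move=> _ c1 _ c2 [phi [phi_lin phi_bij phi_mul]].
have phi_br := lsa_hom_witt_bracket phi_lin c1 c2 phi_mul.
have [e [a [e_sign a_neq0 phiE]]] := witt_automorphism_monomial phi_lin phi_bij phi_br.
have ee : e * e = 1 by case: e_sign => ->.
have a_mul := witt_scaling_multiplicative ee a_neq0 (lsa_hom_monomial phi_lin phiE phi_br).
have f1E m n : f1 m n = e%:~R * f2 (m * e) (n * e).
  apply: (mulIf (a_neq0 (m + n))); rewrite (lsa_hom_monomial phi_lin phiE phi_mul) a_mul.
  by rewrite mulrACA -intrM ee mulr1z mul1r mulrC.
case: e_sign => e1; [left | right] => m n; rewrite f1E e1.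
  by rewrite !mulr1 mul1r.
by rewrite !mulrN1 mulN1r.
Qed.
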